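(* Let $\mathcal{A}$ be a finite set of responses with $|\mathcal{A}|\ge 2$. For each $i\in\mathcal{A}$ let $p_i>0$ with $\sum_{i\in\mathcal{A}}p_i=1$, and let $r^*_i\in\mathbb{R}$. Define $$\alpha_i=\sum_{j\neq i}\frac{p_i}{p_i+p_j},\qquad \beta_i=\sum_{j\neq i}\frac{e^{r^*_i}}{e^{r^*_i}+e^{r^*_j}},\qquad w_i=-(\alpha_i-\beta_i).$$ Suppose $\beta_i$ monotonically increases with $p_i$ (i.e. $\beta_i=h(p_i)$ for all $i\in\mathcal{A}$, for some monotonically increasing function $h$). Then, with all expectations, variances and covariances taken over $i$ drawn uniformly at random from $\mathcal{A}$, $$\operatorname{Var}[w_ip_i]-\operatorname{Var}[w_i]\,\mathbb{E}[p_i^2]\;\geq\;2\Big(\operatorname{Cov}[\alpha_i,\beta_i]\,\mathbb{E}[p_i^2]-\operatorname{Cov}[\alpha_ip_i,\beta_ip_i]\Big).$$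
   Context: Interpretation: for a fixed prompt $x$, $p_i=\pi_\theta(y_i\mid x)$ is the model probability of response $y_i$, and $r^*_i$ is the value of the optimal reward on $(x,y_i)$. The random index $i$ is uniform over the response set $\mathcal{A}$, so e.g. $\mathbb{E}[p_i^2]=\frac{1}{|\mathcal{A}|}\sum_{i\in\mathcal{A}}p_i^2$. *)

From HB Require Import structures.
From mathcomp Require Import all_boot all_order all_algebra.
From mathcomp Require Import reals.
From mathcomp Require Import sequences exp.
Set Implicit Arguments. Unset Strict Implicit. Unset Printing Implicit Defensive.
Import Order.TTheory GRing.Theory Num.Theory.
Local Open Scope ring_scope.

Definition unifE (R : realType) (A : finType) (f : A -> R) : R :=
  (\sum_(i : A) f i) / #|A|%:R.

Definition unifVar (R : realType) (A : finType) (f : A -> R) : R :=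
  unifE (fun i => (f i - unifE f) ^+ 2).

Definition unifCov (R : realType) (A : finType) (f g : A -> R) : R :=
  unifE (fun i => (f i - unifE f) * (g i - unifE g)).

Definition alpha (R : realType) (A : finType) (p : A -> R) (i : A) : R :=
  \sum_(j : A | j != i) p i / (p i + p j).

Definition beta (R : realType) (A : finType) (r : A -> R) (i : A) : R :=
  \sum_(j : A | j != i) expR (r i) / (expR (r i) + expR (r j)).

Definition wgap (R : realType) (A : finType) (p r : A -> R) (i : A) : R :=
  - (alpha p i - beta r i).

From HB Require Import structures.
From mathcomp Require Import all_boot all_order all_algebra.
From mathcomp Require Import reals.
From mathcomp Require Import sequences exp.
From mathcomp Require Import ring lra.
Import Order.TTheory GRing.Theory Num.Theory.
Local Open Scope ring_scope.

Set Implicit Arguments.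
Unset Strict Implicit.
Unset Printing Implicit Defensive.

(* Since w = beta - alpha, expanding the variance of a difference shows that the
   left side minus the right side is
     (Var[beta p] - Var[beta] E[p^2]) + (Var[alpha p] - Var[alpha] E[p^2]),
   so it suffices that Var[f p] >= Var[f] E[p^2] whenever f >= 0 is a
   nondecreasing function of p >= 0 (alpha is one because x / (x + q) increases
   in x, beta by hypothesis).  For such f,
     2 N^3 (Var[f p] - Var[f] E[p^2])
       = sum_(i,j,k) ((f_i p_i - f_j p_j)^2 - (f_i - f_j)^2 p_k^2),
   and the summand summed over the cyclic shifts of (i, j, k) is nonnegative:
   sort the triple by p and use (f_x p_x - f_y p_y)^2 >= (f_x - f_y)^2 max(p_x, p_y)^2. *)

Section UniformMoments.
Variables (R : realType) (A : finType).
Implicit Types f g : A -> R.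
Local Notation N := (#|A|%:R : R).

Lemma eq_unifE f g : f =1 g -> unifE f = unifE g.
Proof. by move=> fg; rewrite /unifE (eq_bigr _ (fun i _ => fg i)). Qed.

Lemma eq_unifVar f g : f =1 g -> unifVar f = unifVar g.
Proof.
by move=> fg; rewrite /unifVar (eq_unifE fg); apply: eq_unifE => i; rewrite fg.
Qed.

Lemma unifED f g : unifE (fun i => f i + g i) = unifE f + unifE g.
Proof. by rewrite /unifE big_split mulrDl. Qed.

Lemma unifEB f g : unifE (fun i => f i - g i) = unifE f - unifE g.
Proof. by rewrite /unifE sumrB mulrBl. Qed.

Lemma unifEZ (c : R) f : unifE (fun i => c * f i) = c * unifE f.
Proof. by rewrite /unifE -mulr_sumr mulrA. Qed.

Lemma unifCovC f g : unifCov f g = unifCov g f.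
Proof. by apply: eq_unifE => i; rewrite mulrC. Qed.

Lemma unifVarB f g :
  unifVar (fun i => f i - g i) = unifVar f + unifVar g - 2 * unifCov f g.
Proof.
rewrite /unifVar /unifCov unifEB.
set mf := unifE f; set mg := unifE g.
rewrite (@eq_unifE _ (fun i => (f i - mf) ^+ 2 + (g i - mg) ^+ 2
                                - 2 * ((f i - mf) * (g i - mg)))); last first.
  by move=> i; ring.
by rewrite unifEB unifED unifEZ.
Qed.

Lemma unifVar_pairs g :
  unifVar g = (\sum_i \sum_j (g i - g j) ^+ 2) / (2 * N ^+ 2).
Proof.
have [A0 | A_gt0] := posnP #|A|.
  by rewrite /unifVar /unifE A0 !(expr0n, mulr0, invr0).
have N_neq0 : N != 0 by rewrite pnatr_eq0 -lt0n.
have sum_sqr_diff : \sum_i \sum_j (g i - g j) ^+ 2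
    = 2 * (N * \sum_i g i ^+ 2 - (\sum_i g i) ^+ 2).
  transitivity (\sum_i (N * g i ^+ 2 + \sum_j g j ^+ 2
                        - 2 * (g i * \sum_j g j))).
    apply: eq_bigr => i _.
    rewrite (eq_bigr (fun j => g i ^+ 2 + g j ^+ 2 - 2 * (g i * g j))); last first.
      by move=> j _; ring.
    by rewrite sumrB big_split /= sumr_const -!mulr_sumr -[_ *+ #|_|]mulr_natl.
  rewrite !big_split /= sumrN -!mulr_sumr sumr_const -[_ *+ #|_|]mulr_natl.
  by rewrite -mulr_suml; ring.
rewrite sum_sqr_diff /unifVar /unifE.
set m := (\sum_i g i) / N.
rewrite (eq_bigr (fun i => g i ^+ 2 - 2 * m * g i + m ^+ 2)); last by move=> i _; ring.
rewrite big_split sumrB /= -mulr_sumr sumr_const /m -mulr_natr.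
by field.
Qed.

Lemma sum3_rot (F : A -> A -> A -> R) :
  \sum_i \sum_j \sum_k F j k i = \sum_i \sum_j \sum_k F i j k.
Proof. by rewrite exchange_big; apply: eq_bigr => j _; rewrite exchange_big. Qed.

End UniformMoments.

Section Comonotone.
Variables (R : realType) (A : finType) (f p : A -> R).
Hypotheses (f_ge0 : forall i, 0 <= f i) (p_ge0 : forall i, 0 <= p i).
Hypothesis f_mono : forall i j, p i <= p j -> f i <= f j.
Local Notation N := (#|A|%:R : R).

Definition comono_gap (i j k : A) : R :=
  (f i * p i - f j * p j) ^+ 2 - (f i - f j) ^+ 2 * p k ^+ 2.

Definition comono_gap3 (i j k : A) : R :=
  comono_gap i j k + comono_gap j k i + comono_gap k i j.

Lemma unifVar_mul_subE :
  unifVar (fun i => f i * p i) - unifVar f * unifE (fun i => p i ^+ 2)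
  = (\sum_i \sum_j \sum_k comono_gap i j k) / (2 * N ^+ 3).
Proof.
have [A0 | A_gt0] := posnP #|A|.
  by rewrite /unifVar /unifE A0 !(expr0n, mulr0, invr0, subr0).
have N_neq0 : N != 0 by rewrite pnatr_eq0 -lt0n.
rewrite !unifVar_pairs /unifE.
set S := \sum_k p k ^+ 2.
have -> : \sum_i \sum_j \sum_k comono_gap i j k
    = N * \sum_i \sum_j (f i * p i - f j * p j) ^+ 2
      - (\sum_i \sum_j (f i - f j) ^+ 2) * S.
  rewrite mulr_sumr mulr_suml -sumrB; apply: eq_bigr => i _.
  rewrite mulr_sumr mulr_suml -sumrB; apply: eq_bigr => j _.
  by rewrite sumrB sumr_const /S mulr_sumr mulr_natl.
by field.
Qed.

Lemma sqr_diff_mul_ge i j : p i <= p j ->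
  (f i - f j) ^+ 2 * p j ^+ 2 <= (f i * p i - f j * p j) ^+ 2.
Proof.
move=> pij; have fij := f_mono pij.
have fp_le : (f j - f i) * p j <= f j * p j - f i * p i.
  by rewrite mulrBl lerD2l lerN2 ler_wpM2l.
have fp_ge0 : 0 <= (f j - f i) * p j by rewrite mulr_ge0 ?subr_ge0.
rewrite -exprMn -(sqrrN (_ * p j)) -(sqrrN (f i * p i - _)) -mulNr !opprB.
by rewrite ler_sqr // nnegrE (le_trans fp_ge0 fp_le).
Qed.

Lemma comono_gap3_sorted i j k :
  p i <= p j -> p j <= p k -> 0 <= comono_gap3 i j k.
Proof.
move=> pij pjk; have pik := le_trans pij pjk.
have [fij fjk] := (f_mono pij, f_mono pjk).
have gap_ij := sqr_diff_mul_ge pij.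
have gap_jk := sqr_diff_mul_ge pjk.
have gap_ik := sqr_diff_mul_ge pik.
have sqr_le x y : 0 <= x -> x <= y -> x ^+ 2 <= y ^+ 2.
  by move=> x_ge0 xy; rewrite ler_sqr // nnegrE (le_trans x_ge0).
have pjk2 : 0 <= p k ^+ 2 - p j ^+ 2 by rewrite subr_ge0 sqr_le.
have pik2 : 0 <= p k ^+ 2 - p i ^+ 2 by rewrite subr_ge0 sqr_le.
have fijk2 : (f j - f i) ^+ 2 <= (f k - f i) ^+ 2.
  by rewrite sqr_le ?subr_ge0 // lerD2r.
(* The negative part of the (i, j) gap is absorbed by the (k, i) gap. *)
have := ler_wpM2r pjk2 fijk2.
have := mulr_ge0 (sqr_ge0 (f j - f k)) pik2.
rewrite /comono_gap3 /comono_gap; lra.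
Qed.

Lemma comono_gap3_rot i j k : comono_gap3 i j k = comono_gap3 j k i.
Proof. by rewrite /comono_gap3; ring. Qed.

Lemma comono_gap3_swap i j k : comono_gap3 i j k = comono_gap3 j i k.
Proof. by rewrite /comono_gap3 /comono_gap; ring. Qed.

Lemma comono_gap3_ge0 i j k : 0 <= comono_gap3 i j k.
Proof.
wlog pij : i j k / p i <= p j.
  move=> ordered_ij; have [|/ltW pji] := leP (p i) (p j); first exact: ordered_ij.
  by rewrite comono_gap3_swap; apply: ordered_ij.
have [pjk | /ltW pkj] := leP (p j) (p k); first exact: comono_gap3_sorted.
have [pik | /ltW pki] := leP (p i) (p k).
  by rewrite comono_gap3_swap comono_gap3_rot; apply: comono_gap3_sorted.
by rewrite 2!comono_gap3_rot; apply: comono_gap3_sorted.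
Qed.

Lemma sum_comono_gap_ge0 : 0 <= \sum_i \sum_j \sum_k comono_gap i j k.
Proof.
have sum_gap3 : \sum_i \sum_j \sum_k comono_gap3 i j k
    = 3 * \sum_i \sum_j \sum_k comono_gap i j k.
  transitivity (\sum_i \sum_j \sum_k comono_gap i j k
                + \sum_i \sum_j \sum_k comono_gap j k i
                + \sum_i \sum_j \sum_k comono_gap k i j).
    rewrite -!big_split; apply: eq_bigr => i _.
    rewrite -!big_split; apply: eq_bigr => j _.
    by rewrite -!big_split.
  have rot1 : \sum_i \sum_j \sum_k comono_gap j k i
             = \sum_i \sum_j \sum_k comono_gap i j k := sum3_rot comono_gap.
  have rot2 : \sum_i \sum_j \sum_k comono_gap k i j
             = \sum_i \sum_j \sum_k comono_gap i j k
    := esym (sum3_rot (fun a b c => comono_gap c a b)).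
  by rewrite rot1 rot2; ring.
rewrite -(pmulr_rge0 _ (ltr0n R 3)) -sum_gap3.
by do 3![apply: sumr_ge0 => ? _]; apply: comono_gap3_ge0.
Qed.

Lemma unifVar_comono_mul :
  unifVar f * unifE (fun i => p i ^+ 2) <= unifVar (fun i => f i * p i).
Proof.
rewrite -subr_ge0 unifVar_mul_subE divr_ge0 ?sum_comono_gap_ge0 //.
by rewrite mulr_ge0 ?exprn_ge0.
Qed.

End Comonotone.

Section PairwiseWinRates.
Variables (R : realType) (A : finType).
Implicit Types (p r : A -> R) (i j : A).

Lemma ler_div_addr (x y q : R) : 0 < x -> x <= y -> 0 < q ->
  x / (x + q) <= y / (y + q).
Proof.
move=> x_gt0 xy q_gt0; have y_gt0 := lt_le_trans x_gt0 xy.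
rewrite ler_pdivrMr ?addr_gt0 // mulrAC ler_pdivlMr ?addr_gt0 //.
nra.
Qed.

Lemma alphaE p i : 0 < p i -> alpha p i = \sum_j p i / (p i + p j) - 2^-1.
Proof.
move=> p_gt0; rewrite [X in _ = X - _](bigD1 i) //= addrAC.
have -> : p i / (p i + p i) = 2^-1.
  by field; rewrite gt_eqF // addr_gt0.
by rewrite subrr add0r.
Qed.

Lemma alpha_ge0 p i : (forall j, 0 <= p j) -> 0 <= alpha p i.
Proof. by move=> p_ge0; apply: sumr_ge0 => j _; rewrite divr_ge0 ?addr_ge0. Qed.

Lemma alpha_mono p i j : (forall k, 0 < p k) -> p i <= p j -> alpha p i <= alpha p j.
Proof.
move=> p_gt0 pij; rewrite !alphaE // lerD2r.
by apply: ler_sum => k _; apply: ler_div_addr.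
Qed.

Lemma beta_ge0 r i : 0 <= beta r i.
Proof.
by apply: sumr_ge0 => j _; rewrite divr_ge0 ?addr_ge0 ?expR_ge0.
Qed.

End PairwiseWinRates.

Theorem theorem4p11 (R : realType) (A : finType) (p r : A -> R) (h : R -> R)
  (hA : (2 <= #|A|)%N)
  (hpos : forall i, 0 < p i)
  (hsum : \sum_(i : A) p i = 1)
  (hmono : forall x y : R, 0 < x -> x <= y -> h x <= h y)
  (hbeta : forall i, beta r i = h (p i)) :
  unifVar (fun i => wgap p r i * p i)
    - unifVar (wgap p r) * unifE (fun i => p i ^+ 2)
  >= 2 * (unifCov (alpha p) (beta r) * unifE (fun i => p i ^+ 2)
          - unifCov (fun i => alpha p i * p i) (fun i => beta r i * p i)).
Proof.
have p_ge0 i : 0 <= p i by exact: ltW.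
have alpha_gap := unifVar_comono_mul (fun i => alpha_ge0 i p_ge0) p_ge0
  (fun i j => alpha_mono hpos).
have beta_mono i j : p i <= p j -> beta r i <= beta r j.
  by rewrite !hbeta; exact: hmono.
have beta_gap := unifVar_comono_mul (beta_ge0 r) p_ge0 beta_mono.
rewrite (eq_unifVar (f := fun i => wgap p r i * p i)
                    (g := fun i => beta r i * p i - alpha p i * p i)); last first.
  by move=> i; rewrite /wgap; ring.
rewrite (eq_unifVar (f := wgap p r) (g := fun i => beta r i - alpha p i)); last first.
  by move=> i; rewrite /wgap; ring.
rewrite !unifVarB (unifCovC (fun i => beta r i * p i)) (unifCovC (beta r)).
lra.
Qed.
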